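(* Let $S=(\mathcal{E},\Sigma,X,\mathcal{O})$ be an entity. Then $S$ is outcome determined (i.e. for all $(e,p),(f,q)\in\mathcal{E}\times\Sigma$, $O(e,p)=O(f,q)$ implies $(e,p)=(f,q)$) if and only if the central eigen closure operator $cl_{eig}$ on $\mathcal{E}\times\Sigma$ satisfies the $T_0$ separation axiom.
   Context: An entity $S=(\mathcal{E},\Sigma,X,\mathcal{O})$ consists of a set $\mathcal{E}$ (experiments), a set $\Sigma$ (states), and for each $e\in\mathcal{E}$, $p\in\Sigma$ a nonempty set $O(e,p)$ (possible outcomes), with $X=\bigcup_{e,p}O(e,p)$ and $\mathcal{O}=\{O(e,p)\}$. The central eigen map $eig:\mathcal{P}(X)\to\mathcal{P}(\mathcal{E}\times\Sigma)$ is defined by $(e,p)\in eig(A)\iff O(e,p)\subseteq A$. Let $\mathcal{Y}_{eig}=\{eig(A): A\subseteq X\}$; it is a closure system (contains $\emptyset$ and $\mathcal{E}\times\Sigma$ and is closed under arbitrary intersections), and $cl_{eig}(K)=\bigcap\{Y\in\mathcal{Y}_{eig}: K\subseteq Y\}$ for $K\subseteq\mathcal{E}\times\Sigma$. A closure operator $cl$ on a set $W$ satisfies $T_0$ iff $cl(\{w\})=cl(\{v\})$ implies $w=v$. *)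

From Stdlib Require Import Classical.

Definition set_eq {T : Type} (A B : T -> Prop) : Prop := forall x, A x <-> B x.

(* An entity S = (E, Sigma, X, O): O e p is the outcome set O(e,p) ⊆ X,
   nonempty, and X is the union of all O(e,p). *)
Record entity : Type := {
  Exp : Type;
  St : Type;
  Out : Type;
  O : Exp -> St -> Out -> Prop;
  O_nonempty : forall e p, exists x, O e p x;
  Out_union : forall x : Out, exists e p, O e p x
}.

Definition eig (S : entity) (A : Out S -> Prop) : Exp S * St S -> Prop :=
  fun ep => forall x, O S (fst ep) (snd ep) x -> A x.

Definition Y_eig (S : entity) (Y : Exp S * St S -> Prop) : Prop :=
  exists A : Out S -> Prop, set_eq Y (eig S A).

Definition cl_eig (S : entity) (K : Exp S * St S -> Prop) : Exp S * St S -> Prop :=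
  fun w => forall Y, Y_eig S Y -> (forall v, K v -> Y v) -> Y w.

Definition T0 {W : Type} (cl : (W -> Prop) -> (W -> Prop)) : Prop :=
  forall w v : W, set_eq (cl (fun u => u = w)) (cl (fun u => u = v)) -> w = v.

Definition outcome_determined (S : entity) : Prop :=
  forall ep fq : Exp S * St S,
    set_eq (O S (fst ep) (snd ep)) (O S (fst fq) (snd fq)) -> ep = fq.


(* The eigen closure of K is eig of the outcomes that K can produce, so the
   closure of a point w consists of the pairs whose outcome set is contained in
   O(w).  Two points therefore have the same closure exactly when they have the
   same outcome set, and T0 becomes outcome determinedness. *)

Definition outcomes (S : entity) (ep : Exp S * St S) : Out S -> Prop :=
  O S (fst ep) (snd ep).

Definition outcomes_of (S : entity) (K : Exp S * St S -> Prop) : Out S -> Prop :=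
  fun x => exists k, K k /\ outcomes S k x.

Lemma eig_monotone (S : entity) (A B : Out S -> Prop) :
  (forall x, A x -> B x) -> forall ep, eig S A ep -> eig S B ep.
Proof. intros AB ep HA x Hx. apply AB, HA, Hx. Qed.

Lemma cl_eigE (S : entity) (K : Exp S * St S -> Prop) :
  set_eq (cl_eig S K) (eig S (outcomes_of S K)).
Proof.
  intro u; split.
  - intros Hu. apply Hu.
    + exists (outcomes_of S K). intro; reflexivity.
    + intros k Kk x Hx. exists k. split; assumption.
  - intros Hu Y [A HA] KY. apply HA.
    apply (eig_monotone S (outcomes_of S K)); [|exact Hu].
    intros x [k [Kk Hx]]. exact (proj1 (HA k) (KY k Kk) x Hx).
Qed.

Lemma cl_eig_point (S : entity) (w u : Exp S * St S) :
  cl_eig S (fun z => z = w) u <-> (forall x, outcomes S u x -> outcomes S w x).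
Proof.
  rewrite (cl_eigE S _ u). split.
  - intros Hu x Hx. destruct (Hu x Hx) as [k [-> Hk]]. exact Hk.
  - intros Hu x Hx. exists w. split; [reflexivity | exact (Hu x Hx)].
Qed.

Lemma cl_eig_point_eq (S : entity) (w v : Exp S * St S) :
  set_eq (cl_eig S (fun z => z = w)) (cl_eig S (fun z => z = v))
  <-> set_eq (outcomes S w) (outcomes S v).
Proof.
  unfold set_eq. setoid_rewrite cl_eig_point. split.
  - intros H x. split.
    + apply (proj1 (H w)). tauto.
    + apply (proj2 (H v)). tauto.
  - intros H u. split; intros Hu x Hx; apply H; auto.
Qed.

Theorem mainTheorem2 (S : entity) :
  outcome_determined S <-> T0 (cl_eig S).
Proof.
  split.
  - intros OD w v Hcl. apply OD, cl_eig_point_eq, Hcl.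
  - intros HT0 w v HO. apply HT0, cl_eig_point_eq, HO.
Qed.
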